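(* Let $\mathfrak{n}$ be the real $7$-dimensional Lie algebra with basis $e_1,\dots,e_7$ whose nonzero brackets (up to antisymmetry) are $[e_1,e_2]=e_4$, $[e_1,e_3]=e_5$, $[e_1,e_4]=e_6$, $[e_1,e_6]=e_7$, $[e_2,e_3]=e_6$, $[e_2,e_5]=e_7$, $[e_3,e_5]=e_7$. Then $\mathfrak{n}$ is not an Einstein nilradical.
   Context: A real nilpotent Lie algebra $\mathfrak{n}$ is called an Einstein nilradical if it admits an inner product such that the left-invariant Riemannian metric it defines on the simply connected nilpotent Lie group with Lie algebra $\mathfrak{n}$ is a nilsoliton, i.e. its Ricci operator satisfies $\mathrm{Ric}=c\,\mathrm{Id}+D$ for some $c\in\mathbb{R}$ and some derivation $D$ of $\mathfrak{n}$. Brackets of basis elements not listed are zero. *)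

From HB Require Import structures.
From mathcomp Require Import all_boot all_order all_algebra.
From mathcomp Require Import reals.
Set Implicit Arguments. Unset Strict Implicit. Unset Printing Implicit Defensive.
Import Order.TTheory GRing.Theory Num.Theory.
Local Open Scope ring_scope.

Section LieDefs.
Variable R : realType.
Variable n : nat.

Definition bracket (mu : 'I_n -> 'I_n -> 'rV[R]_n) (x y : 'rV[R]_n) : 'rV[R]_n :=
  \sum_(i < n) \sum_(j < n) (x 0 i * y 0 j) *: mu i j.

Definition basis_vec (i : 'I_n) : 'rV[R]_n := delta_mx 0 i.

Definition is_derivation (mu : 'I_n -> 'I_n -> 'rV[R]_n) (D : 'M[R]_n) : Prop :=
  forall x y : 'rV[R]_n,
    bracket mu x y *m D = bracket mu (x *m D) y + bracket mu x (y *m D).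

Definition is_inner_product (S : 'M[R]_n) : Prop :=
  S^T = S /\ forall x : 'rV[R]_n, x != 0 -> 0 < (x *m S *m x^T) 0 0.

Definition ip (S : 'M[R]_n) (x y : 'rV[R]_n) : R := (x *m S *m y^T) 0 0.

(* Ricci form of the left-invariant metric defined by S on the nilpotent Lie
   group with Lie algebra (R^n, mu): for an S-orthonormal basis (X_i),
   ric(X,Y) = -1/2 sum_{i,j} <[X,X_i],X_j><[Y,X_i],X_j>
              +1/4 sum_{i,j} <[X_i,X_j],X><[X_i,X_j],Y>,
   written here in the standard basis with G = S^{-1}. *)
Definition ricci_form (mu : 'I_n -> 'I_n -> 'rV[R]_n) (S : 'M[R]_n)
    (x y : 'rV[R]_n) : R :=
  let G := invmx S in
  - (1/2) * (\sum_(a < n) \sum_(b < n)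
       G a b * ip S (bracket mu x (basis_vec a)) (bracket mu y (basis_vec b)))
  + (1/4) * (\sum_(a < n) \sum_(b < n) \sum_(c < n) \sum_(d < n)
       G a c * G b d * ip S (mu a b) x * ip S (mu c d) y).

(* Ricci operator: the S-self-adjoint endomorphism Ric with
   <x Ric, y>_S = ric(x,y), i.e. Ric = B S^{-1} with B the Gram matrix of ric. *)
Definition ricci_op (mu : 'I_n -> 'I_n -> 'rV[R]_n) (S : 'M[R]_n) : 'M[R]_n :=
  (\matrix_(a < n, b < n) ricci_form mu S (basis_vec a) (basis_vec b)) *m invmx S.

Definition is_nilsoliton (mu : 'I_n -> 'I_n -> 'rV[R]_n) (S : 'M[R]_n) : Prop :=
  exists (c : R) (D : 'M[R]_n), is_derivation mu D /\ ricci_op mu S = c%:M + D.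

Definition einstein_nilradical (mu : 'I_n -> 'I_n -> 'rV[R]_n) : Prop :=
  exists S : 'M[R]_n, is_inner_product S /\ is_nilsoliton mu S.

End LieDefs.

(* The 7-dimensional algebra; e_1..e_7 are indices 0..6. *)
Definition e7 (R : realType) (k : nat) : 'rV[R]_7 := delta_mx 0 (inord k).

Definition mu7 (R : realType) (i j : 'I_7) : 'rV[R]_7 :=
  match nat_of_ord i, nat_of_ord j with
  | 0, 1 => e7 R 3 | 1, 0 => - e7 R 3
  | 0, 2 => e7 R 4 | 2, 0 => - e7 R 4
  | 0, 3 => e7 R 5 | 3, 0 => - e7 R 5
  | 0, 5 => e7 R 6 | 5, 0 => - e7 R 6
  | 1, 2 => e7 R 5 | 2, 1 => - e7 R 5
  | 1, 4 => e7 R 6 | 4, 1 => - e7 R 6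
  | 2, 4 => e7 R 6 | 4, 2 => - e7 R 6
  | _, _ => 0
  end.

From Pilot Require Import Defs.
From HB Require Import structures.
From mathcomp Require Import all_boot all_order all_algebra.
From mathcomp Require Import reals.
From mathcomp Require Import ring lra.
Set Implicit Arguments. Unset Strict Implicit. Unset Printing Implicit Defensive.
Import Order.TTheory GRing.Theory Num.Theory.
Local Open Scope ring_scope.

(* Suppose Ric = c I + D with D a derivation.  By the moment-map formula
   tr(Ric A) = 1/4 <mu A, mu> - 1/2 <mu(A., .), mu>, Ric is orthogonal to
   every derivation; for the diagonal derivation d = diag(1,2,2,3,3,4,5) this
   gives 20 c + tr(D d) = 0.  The subspace W = span(e2 - e3, e4, ..., e7) is an
   abelian ideal containing [n, n], so for the orthogonal projection P onto W
   the terms of tr(Ric P) involving W cancel and tr(Ric P) is 1/4 of the sum of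
   |[Y_i, Y_j]|^2 over an orthonormal basis (Y_1, Y_2) of W^perp, which is
   positive because the e4- and e5-coordinates of [Y_1, Y_2] cannot both
   vanish.  But every derivation preserves W, and the derivation equations
   force tr(D d) = 4 tr(D|_W); hence tr(Ric P) = 5 c + tr(D|_W)
   = (20 c + tr(D d)) / 4 = 0. *)

Section InnerProduct.
Variables (R : realType) (n : nat).

Section Bilinear.
Variable S : 'M[R]_n.
Hypothesis S_sym : S^T = S.
Local Notation ip := (ip S).

Lemma ipDl x y z : ip (x + y) z = ip x z + ip y z.
Proof. by rewrite /Defs.ip !mulmxDl mxE. Qed.

Lemma ipZl a x z : ip (a *: x) z = a * ip x z.
Proof. by rewrite /Defs.ip -!scalemxAl mxE. Qed.

Lemma ip0l z : ip 0 z = 0.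
Proof. by rewrite /Defs.ip !mul0mx mxE. Qed.

Lemma ipNl x z : ip (- x) z = - ip x z.
Proof. by rewrite -scaleN1r ipZl mulN1r. Qed.

Lemma ipC x y : ip x y = ip y x.
Proof.
rewrite /Defs.ip.
have -> : x *m S *m y^T = (y *m S *m x^T)^T by rewrite !trmx_mul trmxK S_sym mulmxA.
by rewrite mxE.
Qed.

Lemma ipNr x z : ip z (- x) = - ip z x.
Proof. by rewrite !(ipC z) ipNl. Qed.

Lemma ip0r z : ip z 0 = 0.
Proof. by rewrite ipC ip0l. Qed.

Lemma ipZr a x z : ip z (a *: x) = a * ip z x.
Proof. by rewrite !(ipC z) ipZl. Qed.

Lemma ip_suml (I : finType) (F : I -> 'rV[R]_n) z :
  ip (\sum_i F i) z = \sum_i ip (F i) z.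
Proof. by apply: (big_morph (fun x => ip x z)); [move=> x y; exact: ipDl | exact: ip0l]. Qed.

Lemma ip_sumr (I : finType) (F : I -> 'rV[R]_n) z :
  ip z (\sum_i F i) = \sum_i ip z (F i).
Proof. by rewrite ipC ip_suml; apply: eq_bigr => i _; rewrite ipC. Qed.

Lemma ip_basis x p : ip x (@basis_vec R n p) = (x *m S) 0 p.
Proof. by rewrite /Defs.ip /basis_vec trmx_delta -colE mxE. Qed.

End Bilinear.

Lemma inner_product_unitmx (S : 'M[R]_n) : is_inner_product S -> S \in unitmx.
Proof.
move=> [_ S_pd]; rewrite unitmxE unitfE; apply/negP => /det0P [v nv vS].
by have := S_pd v nv; rewrite vS mul0mx mxE ltxx.
Qed.

Lemma inner_product_inv (S : 'M[R]_n) :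
  is_inner_product S -> is_inner_product (invmx S).
Proof.
move=> S_ip; have S_unit := inner_product_unitmx S_ip; case: S_ip => S_sym S_pd.
split=> [|y y_neq0]; first by rewrite trmx_inv S_sym.
have yG_neq0 : y *m invmx S != 0.
  by apply: contraNneq y_neq0 => yG0; rewrite -[y](mulmxKV S_unit) yG0 mul0mx.
have := S_pd _ yG_neq0; rewrite trmx_mul trmx_inv S_sym.
by rewrite -(mulmxA (y *m _)) (mulmxA S) mulmxV // mul1mx.
Qed.

Lemma inner_product_conj m (S : 'M[R]_n) (U : 'M[R]_(m, n)) :
  is_inner_product S -> row_free U -> is_inner_product (U *m S *m U^T).
Proof.
move=> [S_sym S_pd] /row_freeP [B UB]; split=> [|z z_neq0].
  by rewrite !trmx_mul trmxK S_sym mulmxA.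
have zU_neq0 : z *m U != 0.
  by apply: contraNneq z_neq0 => zU0; rewrite -[z]mulmx1 -UB mulmxA zU0 mul0mx.
by have := S_pd _ zU_neq0; rewrite trmx_mul !mulmxA.
Qed.

End InnerProduct.

Lemma lift0_ord2 : lift ord0 (ord0 : 'I_1) = 1 :> 'I_2.
Proof. exact: val_inj. Qed.

Lemma det_mx22 (R : comNzRingType) (A : 'M[R]_2) :
  \det A = A 0 0 * A 1 1 - A 0 1 * A 1 0.
Proof.
rewrite (expand_det_row _ 0) !big_ord_recl big_ord0 /cofactor !det_mx11 !mxE /=.
rewrite lift0_ord2.
have -> : lift 1 (0 : 'I_1) = 0 :> 'I_2 by exact/val_inj.
by rewrite /= expr0 expr1; ring.
Qed.

Lemma inner_product_det2 (R : realType) (H : 'M[R]_2) :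
  is_inner_product H -> 0 < \det H.
Proof.
move=> [H_sym H_pd]; rewrite det_mx22.
have H10 : H 1 0 = H 0 1 by rewrite -[in LHS]H_sym mxE.
pose z (a b : R) : 'rV[R]_2 := \row_j (if nat_of_ord j == 0%N then a else b).
have quad a b : (z a b *m H *m (z a b)^T) 0 0 =
    a * a * H 0 0 + a * b * (H 0 1 + H 1 0) + b * b * H 1 1.
  rewrite !mxE !big_ord_recl !big_ord0 !mxE /= !big_ord_recl !big_ord0 !mxE /=.
  by rewrite lift0_ord2; ring.
have z_neq0 a b : (a != 0) || (b != 0) -> z a b != 0.
  apply: contraTneq => /rowP z0; move: (z0 0) (z0 1).
  by rewrite !mxE /= => -> ->; rewrite eqxx.
have H00 : 0 < H 0 0.
  by have := H_pd _ (z_neq0 1 0 (introT orP (or_introl (oner_neq0 R)))); rewrite quad; lra.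
have := H_pd _ (z_neq0 (- H 0 1) _ (introT orP (or_intror (lt0r_neq0 H00)))).
by rewrite quad H10 -(pmulr_rgt0 _ H00) => pos; nra.
Qed.

Section Bracket.
Variables (R : realType) (n : nat) (mu : 'I_n -> 'I_n -> 'rV[R]_n).
Hypothesis mu_anti : forall i j, mu j i = - mu i j.
Local Notation br := (bracket mu).

Lemma bracket_anti x y : br y x = - br x y.
Proof.
rewrite /bracket exchange_big -sumrN; apply: eq_bigr => i _.
by rewrite -sumrN; apply: eq_bigr => j _; rewrite mu_anti scalerN mulrC.
Qed.

Lemma bracketxx x : br x x = 0.
Proof.
have : (2%:R : R) *: br x x = 0 by rewrite scaler_nat mulr2n {1}bracket_anti addNr.
by move/eqP; rewrite scaler_eq0 pnatr_eq0 /= => /eqP.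
Qed.

Lemma bracketZl a x y : br (a *: x) y = a *: br x y.
Proof.
rewrite /bracket scaler_sumr; apply: eq_bigr => i _.
by rewrite scaler_sumr; apply: eq_bigr => j _; rewrite scalerA mxE mulrA.
Qed.

Lemma bracketZr a x y : br x (a *: y) = a *: br x y.
Proof.
rewrite /bracket scaler_sumr; apply: eq_bigr => i _.
by rewrite scaler_sumr; apply: eq_bigr => j _; rewrite scalerA mxE mulrCA.
Qed.

Lemma bracket_basis p q : br (@basis_vec R n p) (@basis_vec R n q) = mu p q.
Proof.
rewrite /bracket (bigD1 p) //= (bigD1 q) //=.
rewrite big1; last by move=> j jq; rewrite !mxE (negbTE jq) andbF mulr0 scale0r.
rewrite big1; last first.
  by move=> i ip; rewrite big1 // => j _; rewrite !mxE (negbTE ip) andbF mul0r scale0r.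
by rewrite !mxE !eqxx mulr1 scale1r !addr0.
Qed.

Lemma bracket_mulmx_eq0 (A : 'M[R]_n) :
  (forall i j, mu i j *m A = 0) -> forall x y, br x y *m A = 0.
Proof.
move=> muA x y; rewrite /bracket mulmx_suml big1 // => i _.
by rewrite mulmx_suml big1 // => j _; rewrite -scalemxAl muA scaler0.
Qed.

End Bracket.

Section ExchangeBig.
Variables (V : nmodType) (n : nat).

Lemma exchange_big3 (F : 'I_n -> 'I_n -> 'I_n -> V) :
  \sum_p \sum_q \sum_a F p q a = \sum_a \sum_p \sum_q F p q a.
Proof. under eq_bigr do rewrite exchange_big. by rewrite exchange_big. Qed.

Lemma exchange_big4_rev (F : 'I_n -> 'I_n -> 'I_n -> 'I_n -> V) :
  \sum_p \sum_q \sum_a \sum_b F p q a b = \sum_b \sum_a \sum_q \sum_p F p q a b.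
Proof.
under eq_bigr do rewrite exchange_big3.
rewrite exchange_big; apply: eq_bigr => b _.
by rewrite exchange_big3; apply: eq_bigr => a _; rewrite exchange_big.
Qed.

End ExchangeBig.

Lemma mulmx_outer_sum (R : comNzRingType) m n (V : 'M[R]_(m, n)) (K : 'M[R]_m) :
  V^T *m K *m V = \sum_i \sum_j K i j *: ((row i V)^T *m row j V).
Proof.
apply/matrixP => q p; rewrite mxE summxE.
under [RHS]eq_bigr do rewrite summxE.
rewrite [RHS]exchange_big; apply: eq_bigr => j _.
rewrite mxE mulr_suml; apply: eq_bigr => i _.
by rewrite !mxE big_ord1 !mxE; ring.
Qed.

Lemma quad_form_sum (R : comNzRingType) n (u v : 'rV[R]_n) (M : 'M[R]_n) :
  (u *m M *m v^T) 0 0 = \sum_p \sum_q u 0 q * M q p * v 0 p.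
Proof.
rewrite mxE; apply: eq_bigr => p _; rewrite !mxE mulr_suml.
by apply: eq_bigr => q _.
Qed.

Section RicciTrace.
Variables (R : realType) (n : nat) (mu : 'I_n -> 'I_n -> 'rV[R]_n).
Hypothesis mu_anti : forall i j, mu j i = - mu i j.
Variable S : 'M[R]_n.
Hypothesis S_ip : is_inner_product S.
Local Notation G := (invmx S).
Local Notation ip := (ip S).
Local Notation br := (bracket mu).

Let S_sym : S^T = S. Proof. by case: S_ip. Qed.
Let G_sym : G^T = G. Proof. by rewrite trmx_inv S_sym. Qed.

(* In an S-orthonormal frame, [bracket_contr (invmx S) (invmx S)] is |mu|^2,
   [bracket_contr (invmx S *m A) (invmx S)] is <mu(A., .), mu> and
   [image_contr A] is <mu(., .) A, mu>. *)
Definition bracket_contr (X Y : 'M[R]_n) : R :=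
  \sum_p \sum_q \sum_a \sum_b X q p * Y a b * ip (mu p a) (mu q b).

Definition image_contr (A : 'M[R]_n) : R :=
  \sum_a \sum_b ip (br (row a G) (row b G) *m A) (mu a b).

Lemma bracket_contr_rows X Y :
  bracket_contr X Y = \sum_q \sum_b ip (br (row q X) (row b Y^T)) (mu q b).
Proof.
rewrite /bracket_contr exchange_big; apply: eq_bigr => q _; rewrite exchange_big3.
apply: eq_bigr => b _; rewrite /bracket ip_suml; apply: eq_bigr => p _.
by rewrite ip_suml; apply: eq_bigr => a _; rewrite ipZl !mxE; ring.
Qed.

Lemma image_contrE A : image_contr A =
  \sum_a \sum_b \sum_c \sum_d G a c * G b d * ip (mu c d *m A) (mu a b).
Proof.
apply: eq_bigr => a _; apply: eq_bigr => b _.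
rewrite /bracket mulmx_suml ip_suml; apply: eq_bigr => c _.
rewrite mulmx_suml ip_suml; apply: eq_bigr => d _.
by rewrite -scalemxAl ipZl !mxE.
Qed.

Lemma trace_ricci_mul A :
  \tr (ricci_op mu S *m A) = -(1/2) * bracket_contr (G *m A) G + 1/4 * image_contr A.
Proof.
rewrite image_contrE /ricci_op -mulmxA /mxtrace.
under eq_bigr do rewrite mxE.
under eq_bigr do under eq_bigr do rewrite mxE /ricci_form mulrDl.
under eq_bigr do rewrite big_split /=.
rewrite big_split /=; congr (_ + _).
  rewrite /bracket_contr mulr_sumr; apply: eq_bigr => p _.
  rewrite mulr_sumr; apply: eq_bigr => q _.
  rewrite -mulrA; congr (_ * _); rewrite mulr_suml; apply: eq_bigr => a _.
  by rewrite mulr_suml; apply: eq_bigr => b _; rewrite !bracket_basis; ring.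
have -> : \sum_p \sum_q 1 / 4 * (\sum_a \sum_b \sum_c \sum_d
     G a c * G b d * ip (mu a b) (@basis_vec R n p) * ip (mu c d) (@basis_vec R n q)) *
     (G *m A) q p =
   1/4 * \sum_p \sum_q \sum_a \sum_b \sum_c \sum_d
     (G a c * G b d * ((mu a b *m S) 0 p * (mu c d *m S) 0 q * (G *m A) q p)).
  rewrite mulr_sumr; apply: eq_bigr => p _; rewrite mulr_sumr; apply: eq_bigr => q _.
  rewrite -mulrA; congr (_ * _); rewrite mulr_suml; apply: eq_bigr => a _.
  rewrite mulr_suml; apply: eq_bigr => b _; rewrite mulr_suml; apply: eq_bigr => c _.
  by rewrite mulr_suml; apply: eq_bigr => d _; rewrite !ip_basis; ring.
congr (_ * _); rewrite exchange_big3; apply: eq_bigr => a _.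
rewrite exchange_big3; apply: eq_bigr => b _; rewrite exchange_big3; apply: eq_bigr => c _.
rewrite exchange_big3; apply: eq_bigr => d _.
under eq_bigr do rewrite -mulr_sumr. rewrite -mulr_sumr /Defs.ip; congr (_ * _).
have -> : mu c d *m A *m S *m (mu a b)^T =
    (mu c d *m S) *m (G *m A) *m (mu a b *m S)^T.
  rewrite trmx_mul S_sym !mulmxA -[mu c d *m S *m G]mulmxA.
  by rewrite mulmxV ?mulmx1 //; exact: inner_product_unitmx.
by rewrite quad_form_sum; apply: eq_bigr => p _; apply: eq_bigr => q _; ring.
Qed.

Lemma image_contr_derivation A :
  is_derivation mu A -> image_contr A = 2 * bracket_contr (G *m A) G.
Proof.
move=> derA; rewrite bracket_contr_rows G_sym /image_contr.
under eq_bigr do under eq_bigr do rewrite derA ipDl.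
under eq_bigr do rewrite big_split /=.
rewrite big_split /= mulr_natl mulr2n; congr (_ + _).
  by apply: eq_bigr => a _; apply: eq_bigr => b _; rewrite row_mul.
rewrite exchange_big; apply: eq_bigr => b _; apply: eq_bigr => a _.
by rewrite bracket_anti // (mu_anti a b) ipNl ipNr // row_mul.
Qed.

Lemma trace_ricci_derivation A :
  is_derivation mu A -> \tr (ricci_op mu S *m A) = 0.
Proof. by move=> derA; rewrite trace_ricci_mul image_contr_derivation //; field. Qed.

Lemma trace_ricci : \tr (ricci_op mu S) = -(1/4) * bracket_contr G G.
Proof.
have image_contr1 : image_contr 1%:M = bracket_contr G G.
  rewrite bracket_contr_rows G_sym.
  by apply: eq_bigr => a _; apply: eq_bigr => b _; rewrite mulmx1.
by rewrite -[ricci_op mu S]mulmx1 trace_ricci_mul mulmx1 image_contr1; field.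
Qed.

Lemma bracket_contrC X Y : bracket_contr X Y = bracket_contr Y X.
Proof.
rewrite /bracket_contr [RHS]exchange_big4_rev; apply: eq_bigr => p _.
apply: eq_bigr => q _; apply: eq_bigr => a _; apply: eq_bigr => b _.
by rewrite (mu_anti b q) (mu_anti a p) ipNl ipNr // opprK ipC // [X q p * _]mulrC.
Qed.

Lemma bracket_contrDl X Y Z :
  bracket_contr (X + Y) Z = bracket_contr X Z + bracket_contr Y Z.
Proof.
rewrite /bracket_contr -big_split; apply: eq_bigr => p _.
rewrite -big_split; apply: eq_bigr => q _; rewrite -big_split; apply: eq_bigr => a _.
by rewrite -big_split; apply: eq_bigr => b _; rewrite mxE /=; ring.
Qed.

Lemma bracket_contrZl c X Z : bracket_contr (c *: X) Z = c * bracket_contr X Z.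
Proof.
rewrite /bracket_contr mulr_sumr; apply: eq_bigr => p _.
rewrite mulr_sumr; apply: eq_bigr => q _; rewrite mulr_sumr; apply: eq_bigr => a _.
by rewrite mulr_sumr; apply: eq_bigr => b _; rewrite mxE; ring.
Qed.

Lemma bracket_contrDr X Y Z :
  bracket_contr Z (X + Y) = bracket_contr Z X + bracket_contr Z Y.
Proof. by rewrite !(bracket_contrC Z) bracket_contrDl. Qed.

Lemma bracket_contrZr c X Z : bracket_contr Z (c *: X) = c * bracket_contr Z X.
Proof. by rewrite !(bracket_contrC Z) bracket_contrZl. Qed.

Lemma bracket_contr_suml (I : finType) (F : I -> 'M[R]_n) Z :
  bracket_contr (\sum_i F i) Z = \sum_i bracket_contr (F i) Z.
Proof.
apply: (big_morph (bracket_contr^~ Z)); first by move=> X Y; exact: bracket_contrDl.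
by rewrite -(scale0r 0) bracket_contrZl mul0r.
Qed.

Lemma bracket_contr_sumr (I : finType) (F : I -> 'M[R]_n) Z :
  bracket_contr Z (\sum_i F i) = \sum_i bracket_contr Z (F i).
Proof.
by rewrite bracket_contrC bracket_contr_suml; apply: eq_bigr => i _; rewrite bracket_contrC.
Qed.

Lemma bracket_contr_outer (x y z w : 'rV[R]_n) :
  bracket_contr (x^T *m y) (z^T *m w) = ip (br y z) (br x w).
Proof.
have row_outer (u v : 'rV[R]_n) q : row q (u^T *m v) = u 0 q *: v.
  by apply/rowP => j; rewrite !mxE big_ord1 !mxE.
rewrite bracket_contr_rows trmx_mul trmxK {3}/bracket ip_sumr //.
apply: eq_bigr => q _; rewrite ip_sumr //; apply: eq_bigr => b _.
by rewrite !row_outer bracketZl bracketZr scalerA ipZl ipZr // mulrC.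
Qed.

Lemma bracket_contr_rank2 (V : 'M[R]_(2, n)) (K : 'M[R]_2) : K^T = K ->
  bracket_contr (V^T *m K *m V) (V^T *m K *m V) =
  2 * \det K * ip (br (row 0 V) (row 1 V)) (br (row 0 V) (row 1 V)).
Proof.
move=> K_sym; have K10 : K 1 0 = K 0 1 by rewrite -[in LHS]K_sym mxE.
rewrite mulmx_outer_sum bracket_contr_suml.
under eq_bigr do rewrite bracket_contr_suml.
under eq_bigr do under eq_bigr do rewrite bracket_contrZl bracket_contr_sumr.
under eq_bigr do under eq_bigr do under eq_bigr do rewrite bracket_contr_sumr.
under eq_bigr do under eq_bigr do under eq_bigr do under eq_bigr do
  rewrite bracket_contrZr bracket_contr_outer.
rewrite !big_ord_recl !big_ord0 lift0_ord2 !bracketxx // !ip0l !ip0r // det_mx22 K10.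
by rewrite (bracket_anti _ (row 0 V) (row 1 V)) // !ipNl !ipNr //; ring.
Qed.

Lemma bracket_contr_eq0 m (U : 'M[R]_(m, n)) X Y :
  (forall x y, x *m U^T = 0 -> y *m U^T = 0 -> br x y = 0) ->
  X *m U^T = 0 -> U *m Y = 0 -> bracket_contr X Y = 0.
Proof.
move=> kerU_abelian XU0 UY0; rewrite bracket_contr_rows.
rewrite big1 // => q _; rewrite big1 // => b _; rewrite kerU_abelian ?ip0l //.
  by rewrite -row_mul XU0 row0.
by rewrite -row_mul -trmx_mul UY0 trmx0 row0.
Qed.

End RicciTrace.

Section PerpProjection.
Variables (R : realType) (n m : nat) (mu : 'I_n -> 'I_n -> 'rV[R]_n).
Hypothesis mu_anti : forall i j, mu j i = - mu i j.
Variables (S : 'M[R]_n) (U : 'M[R]_(m, n)).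
Hypothesis S_ip : is_inner_product S.
Hypothesis U_free : row_free U.
Local Notation G := (invmx S).
Local Notation V := (U *m invmx S).
Local Notation K := (invmx (U *m invmx S *m U^T)).

Let G_sym : G^T = G. Proof. by case: (inner_product_inv S_ip). Qed.
Let H_unit : U *m G *m U^T \in unitmx.
Proof. exact/inner_product_unitmx/inner_product_conj/U_free/inner_product_inv. Qed.

(* The S-orthogonal projection onto the S-orthogonal complement of
   W = {x | x *m U^T = 0}, along W. *)
Definition perp_proj : 'M[R]_n := U^T *m K *m V.

Lemma mxtrace_perp_proj : \tr perp_proj = m%:R.
Proof. by rewrite mxtrace_mulC mulmxA mulmxV // mxtrace1. Qed.

Lemma mxtrace_mul_perp_proj D E :
  D *m U^T = U^T *m E -> \tr (D *m perp_proj) = \tr E.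
Proof.
move=> DU; rewrite /perp_proj !mulmxA DU -!mulmxA mxtrace_mulC -!mulmxA.
by rewrite (mulmxA U) mulVmx // mulmx1.
Qed.

Lemma invmx_mul_perp_proj : G *m perp_proj = V^T *m K *m V.
Proof. by rewrite /perp_proj !mulmxA trmx_mul G_sym. Qed.

Hypothesis mu_kerU : forall i j, mu i j *m U^T = 0.
Hypothesis kerU_abelian :
  forall x y, x *m U^T = 0 -> y *m U^T = 0 -> bracket mu x y = 0.

Lemma trace_ricci_sub_perp_proj :
  \tr (ricci_op mu S) - \tr (ricci_op mu S *m perp_proj) =
  1/4 * bracket_contr mu S (V^T *m K *m V) (V^T *m K *m V).
Proof.
have image_contr_proj : image_contr mu S perp_proj = 0.
  have mu_proj i j : mu i j *m perp_proj = 0 by rewrite /perp_proj !mulmxA mu_kerU !mul0mx.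
  rewrite /image_contr big1 // => a _; rewrite big1 // => b _.
  by rewrite bracket_mulmx_eq0 // ip0l.
rewrite trace_ricci // trace_ricci_mul // image_contr_proj -invmx_mul_perp_proj.
set P := G *m perp_proj.
have UP : U *m P = V by rewrite /P /perp_proj !mulmxA mulmxV // mul1mx.
have PU : P *m U^T = G *m U^T.
  by rewrite /P /perp_proj -!mulmxA (mulmxA U) mulVmx // mulmx1.
have GP_W : (G - P) *m U^T = 0 by rewrite mulmxBl PU subrr.
have W_GP : U *m (G - P) = 0 by rewrite mulmxBr UP subrr.
have GP0 := bracket_contr_eq0 S kerU_abelian GP_W W_GP.
(* Split invmx S into its W-part G - P and its W^perp-part P; the W x W
   contribution to |mu|^2 vanishes because W is abelian. *)
rewrite -[in bracket_contr _ _ G G](subrK P G) -[in bracket_contr _ _ P G](subrK P G).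
move: (G - P) GP0 => Y Y0.
rewrite bracket_contrDl // !bracket_contrDr // Y0 (bracket_contrC _ S_ip Y P) //.
by field.
Qed.

End PerpProjection.

Lemma trace_ricci_perp_proj_lt (R : realType) n (mu : 'I_n -> 'I_n -> 'rV[R]_n)
    (S : 'M[R]_n) (U : 'M[R]_(2, n)) :
  (forall i j, mu j i = - mu i j) -> is_inner_product S -> row_free U ->
  (forall i j, mu i j *m U^T = 0) ->
  (forall x y, x *m U^T = 0 -> y *m U^T = 0 -> bracket mu x y = 0) ->
  bracket mu (row 0 (U *m invmx S)) (row 1 (U *m invmx S)) != 0 ->
  \tr (ricci_op mu S *m perp_proj S U) < \tr (ricci_op mu S).
Proof.
move=> mu_anti S_ip U_free mu_kerU kerU_abelian nu_neq0.
have K_ip : is_inner_product (invmx (U *m invmx S *m U^T)).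
  exact: inner_product_inv (inner_product_conj (inner_product_inv S_ip) U_free).
rewrite -subr_gt0 trace_ricci_sub_perp_proj // bracket_contr_rank2 //; last by case: K_ip.
have := inner_product_det2 K_ip; have := S_ip.2 _ nu_neq0; rewrite -/(ip _ _ _).
nra.
Qed.

Section Algebra7.
Variable R : realType.

(* Spelled with lift to match the ordinals produced by big_ord_recl. *)
Local Notation o0 := (ord0 : 'I_7).
Local Notation o1 := (lift ord0 (ord0 : 'I_6) : 'I_7).
Local Notation o2 := (lift ord0 (lift ord0 (ord0 : 'I_5)) : 'I_7).
Local Notation o3 := (lift ord0 (lift ord0 (lift ord0 (ord0 : 'I_4))) : 'I_7).
Local Notation o4 := (lift ord0 (lift ord0 (lift ord0 (lift ord0 (ord0 : 'I_3)))) : 'I_7).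
Local Notation o5 :=
  (lift ord0 (lift ord0 (lift ord0 (lift ord0 (lift ord0 (ord0 : 'I_2))))) : 'I_7).
Local Notation o6 :=
  (lift ord0 (lift ord0 (lift ord0 (lift ord0 (lift ord0 (lift ord0 (ord0 : 'I_1)))))) : 'I_7).

Definition bracket7 (x y : 'I_7 -> R) (k : 'I_7) : R :=
  match nat_of_ord k with
  | 3 => x o0 * y o1 - x o1 * y o0
  | 4 => x o0 * y o2 - x o2 * y o0
  | 5 => x o0 * y o3 - x o3 * y o0 + x o1 * y o2 - x o2 * y o1
  | 6 => x o0 * y o5 - x o5 * y o0 + x o1 * y o4 - x o4 * y o1
         + x o2 * y o4 - x o4 * y o2
  | _ => 0
  end.

Lemma eq_bracket7 x x' y y' : x =1 x' -> y =1 y' -> bracket7 x y =1 bracket7 x' y'.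
Proof. by move=> ex ey k; rewrite /bracket7 !ex !ey. Qed.

Lemma mu7E (i j k : 'I_7) : @mu7 R i j 0 k =
  match nat_of_ord i, nat_of_ord j with
  | 0, 1 => (k == 3 :> nat)%:R | 1, 0 => - (k == 3 :> nat)%:R
  | 0, 2 => (k == 4 :> nat)%:R | 2, 0 => - (k == 4 :> nat)%:R
  | 0, 3 => (k == 5 :> nat)%:R | 3, 0 => - (k == 5 :> nat)%:R
  | 0, 5 => (k == 6 :> nat)%:R | 5, 0 => - (k == 6 :> nat)%:R
  | 1, 2 => (k == 5 :> nat)%:R | 2, 1 => - (k == 5 :> nat)%:R
  | 1, 4 => (k == 6 :> nat)%:R | 4, 1 => - (k == 6 :> nat)%:R
  | 2, 4 => (k == 6 :> nat)%:R | 4, 2 => - (k == 6 :> nat)%:R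
  | _, _ => 0
  end.
Proof.
rewrite /mu7 /e7.
case: i => [[|[|[|[|[|[|[|i]]]]]]] Hi] //=; case: j => [[|[|[|[|[|[|[|j]]]]]]] Hj] //=;
  by rewrite ?mxE /= -?val_eqE /= ?inordK.
Qed.

Lemma bracket_mu7 x y : bracket (@mu7 R) x y = \row_k bracket7 (x 0) (y 0) k.
Proof.
apply/rowP => k; rewrite !mxE /bracket summxE.
under eq_bigr do rewrite summxE.
under eq_bigr do under eq_bigr do rewrite mxE mu7E.
rewrite !big_ord_recl !big_ord0 /=.
by case: k => [[|[|[|[|[|[|[|k]]]]]]] Hk] //=; rewrite /bracket7 /=; ring.
Qed.

Lemma mu7_anti (i j : 'I_7) : @mu7 R j i = - @mu7 R i j.
Proof.
case: i => [[|[|[|[|[|[|[|i]]]]]]] Hi] //=; case: j => [[|[|[|[|[|[|[|j]]]]]]] Hj] //=;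
  by rewrite /mu7 /= ?opprK ?oppr0.
Qed.

Definition weights7 : 'rV[R]_7 := \row_i (nth 0 [:: 1; 2; 2; 3; 3; 4; 5] i)%:R.

Lemma derivation7_weights : is_derivation (@mu7 R) (diag_mx weights7).
Proof.
move=> x y; rewrite !bracket_mu7 !mul_mx_diag; apply/rowP => k; rewrite !mxE.
by case: k => [[|[|[|[|[|[|[|k]]]]]]] Hk]; rewrite /bracket7 /= ?mxE /=; ring.
Qed.

(* The rows of U7 are the functionals e1^* and e2^* + e3^*, so that
   W = {x | x *m U7^T = 0} = span(e2 - e3, e4, e5, e6, e7). *)
Definition U7 : 'M[R]_(2, 7) := \matrix_(i, j)
  (if nat_of_ord i == 0%N then (nat_of_ord j == 0%N)%:R
   else ((nat_of_ord j == 1%N) || (nat_of_ord j == 2%N))%:R).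

Lemma U7_free : row_free U7.
Proof.
apply/row_freeP; exists (\matrix_(j, i) (nat_of_ord j == nat_of_ord i)%:R).
apply/matrixP => i j; rewrite !mxE !big_ord_recl big_ord0 !mxE.
by case: i => [[|[|i]] Hi] //; case: j => [[|[|j]] Hj] //=; rewrite /= ?mxE; ring.
Qed.

Lemma mu7_kerU7 i j : @mu7 R i j *m U7^T = 0.
Proof.
apply/matrixP => a k; rewrite [a]ord1 !mxE !big_ord_recl !big_ord0 !mxE !mu7E.
case: i => [[|[|[|[|[|[|[|i]]]]]]] Hi] //=; case: j => [[|[|[|[|[|[|[|j]]]]]]] Hj] //=;
  by case: k => [[|[|k]] Hk] //=; ring.
Qed.

Lemma kerU7E (x : 'rV[R]_7) : x *m U7^T = 0 -> x 0 o0 = 0 /\ x 0 o2 = - x 0 o1.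
Proof.
move=> /rowP xU; have := xU 0; have := xU 1.
rewrite !mxE !big_ord_recl !big_ord0 !mxE /=; lra.
Qed.

Lemma kerU7_abelian x y :
  x *m U7^T = 0 -> y *m U7^T = 0 -> bracket (@mu7 R) x y = 0.
Proof.
move=> /kerU7E [x0 x2] /kerU7E [y0 y2]; rewrite bracket_mu7; apply/rowP => k.
by rewrite !mxE; case: k => [[|[|[|[|[|[|[|k]]]]]]] Hk]; rewrite /bracket7 /= ?x0 ?x2 ?y0 ?y2; ring.
Qed.

Lemma bracket7_det (V : 'M[R]_(2, 7)) :
  let nu := bracket (@mu7 R) (row 0 V) (row 1 V) in
  nu 0 o3 + nu 0 o4 = \det (V *m U7^T).
Proof.
rewrite /= bracket_mu7 det_mx22 !mxE /bracket7 /= !big_ord_recl !big_ord0 !mxE /=.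
by rewrite lift0_ord2; ring.
Qed.

Lemma derivation7_at (D : 'M[R]_7) : is_derivation (@mu7 R) D ->
  forall a b k : 'I_7,
  \sum_i bracket7 (fun j => (a == j)%:R) (fun j => (b == j)%:R) i * D i k =
  bracket7 (D a) (fun j => (b == j)%:R) k + bracket7 (fun j => (a == j)%:R) (D b) k.
Proof.
have delta_entry (a : 'I_7) : (delta_mx 0 a : 'rV[R]_7) 0 =1 (fun j => (a == j)%:R :> R).
  by move=> j; rewrite mxE eq_sym.
have row_entry (a : 'I_7) : row a D 0 =1 D a by move=> j; rewrite mxE.
move=> derD a b k.
have := congr1 (fun v : 'rV_7 => v 0 k) (derD (delta_mx 0 a) (delta_mx 0 b)).
rewrite /= -!rowE !bracket_mu7 !mxE (eq_bracket7 (row_entry a) (delta_entry b)).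
rewrite (eq_bracket7 (delta_entry a) (row_entry b)) => <-.
by apply: eq_bigr => i _; rewrite mxE (eq_bracket7 (delta_entry a) (delta_entry b)).
Qed.

Definition quot7 (D : 'M[R]_7) : 'M[R]_2 := \matrix_(i, j)
  if nat_of_ord i == 0%N then (if nat_of_ord j == 0%N then D o0 o0 else D o0 o1 + D o0 o2)
  else (if nat_of_ord j == 0%N then 0 else D o1 o1 + D o1 o2).

Tactic Notation "derivation_at" constr(derD) constr(a) constr(b) constr(k) :=
  let h := fresh "h" in
  have h := derivation7_at derD a b k;
  rewrite !big_ord_recl !big_ord0 /bracket7 /= in h;
  rewrite ?(mulr0, mul0r, mulr1, mul1r, addr0, add0r, subr0, sub0r, oppr0) in h.

Lemma derivation7_entries D : is_derivation (@mu7 R) D ->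
  (D o1 o0 = 0 /\ D o2 o0 = 0 /\ D o3 o0 = 0 /\ D o4 o0 = 0 /\ D o5 o0 = 0 /\ D o6 o0 = 0) /\
  (D o3 o1 + D o3 o2 = 0 /\ D o4 o1 + D o4 o2 = 0 /\ D o5 o1 + D o5 o2 = 0 /\
   D o6 o1 + D o6 o2 = 0 /\ D o2 o1 + D o2 o2 = D o1 o1 + D o1 o2) /\
  (D o1 o2 = 0 /\ D o1 o1 = 2 * D o0 o0 /\ D o2 o2 = 2 * D o0 o0 /\
   D o3 o3 = 3 * D o0 o0 /\ D o4 o4 = 3 * D o0 o0 /\ D o6 o6 = 5 * D o0 o0).
Proof.
move=> derD.
derivation_at derD o0 o1 o0. derivation_at derD o0 o2 o0. derivation_at derD o0 o3 o0.
derivation_at derD o0 o5 o0. derivation_at derD o1 o2 o4. derivation_at derD o0 o3 o4.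
derivation_at derD o0 o1 o2. derivation_at derD o1 o2 o3. derivation_at derD o0 o3 o3.
derivation_at derD o0 o1 o1. derivation_at derD o0 o2 o1. derivation_at derD o0 o2 o2.
derivation_at derD o0 o3 o1. derivation_at derD o0 o3 o2. derivation_at derD o0 o5 o1.
derivation_at derD o0 o5 o2. derivation_at derD o0 o2 o3. derivation_at derD o0 o4 o5.
derivation_at derD o0 o1 o4. derivation_at derD o1 o3 o6. derivation_at derD o1 o4 o6.
derivation_at derD o2 o4 o6. derivation_at derD o0 o1 o3. derivation_at derD o0 o2 o4.
derivation_at derD o0 o3 o5. derivation_at derD o0 o5 o6. derivation_at derD o1 o2 o5.
by repeat split; lra.
Qed.

Lemma ord7_cases (i : 'I_7) :
  i = o0 \/ i = o1 \/ i = o2 \/ i = o3 \/ i = o4 \/ i = o5 \/ i = o6.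
Proof.
by case: i => [[|[|[|[|[|[|[|i]]]]]]] Hi] //; [left | do 1 right; left | do 2 right; left
  | do 3 right; left | do 4 right; left | do 5 right; left | do 6 right]; exact: val_inj.
Qed.

Lemma derivation7_quot D : is_derivation (@mu7 R) D -> D *m U7^T = U7^T *m quot7 D.
Proof.
move=> /derivation7_entries [[d10 [d20 [d30 [d40 [d50 d60]]]]] [[e3 [e4 [e5 [e6 e2]]]] _]].
apply/matrixP => i j; rewrite !mxE !big_ord_recl !big_ord0 !mxE /=.
have [-> | ->] : j = 0 \/ j = 1 by case: j => [[|[|j]] Hj]; [left | right | by []]; exact: val_inj.
  by case: (ord7_cases i) => [->|[->|[->|[->|[->|[->|->]]]]]] /=; lra.
by case: (ord7_cases i) => [->|[->|[->|[->|[->|[->|->]]]]]] /=; lra.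
Qed.

Lemma mxtrace_weights7 : \tr (diag_mx weights7) = 20.
Proof. by rewrite mxtrace_diag !big_ord_recl big_ord0 !mxE /=; lra. Qed.

Lemma derivation7_trace D : is_derivation (@mu7 R) D ->
  \tr (D *m diag_mx weights7) = 4 * (\tr D - \tr (quot7 D)).
Proof.
move=> /derivation7_entries [_ [_ [d12 [d11 [d22 [d33 [d44 d66]]]]]]].
rewrite mul_mx_diag /mxtrace !big_ord_recl !big_ord0 !mxE /=; lra.
Qed.

Lemma bracket_rows_U7_neq0 S : is_inner_product S ->
  bracket (@mu7 R) (row 0 (U7 *m invmx S)) (row 1 (U7 *m invmx S)) != 0.
Proof.
move=> S_ip; have H_ip := inner_product_conj (inner_product_inv S_ip) U7_free.
apply/eqP => nu0; have := bracket7_det (U7 *m invmx S).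
by rewrite /= nu0 !mxE addr0 => /esym/eqP; rewrite (gt_eqF (inner_product_det2 H_ip)).
Qed.

End Algebra7.

Theorem mainTheorem2 (R : realType) : ~ einstein_nilradical (@mu7 R).
Proof.
move=> [S [S_ip [c [D [derD ricE]]]]].
have ricE_tr A : \tr (ricci_op (@mu7 R) S *m A) = c * \tr A + \tr (D *m A).
  by rewrite ricE mulmxDl mxtraceD mul_scalar_mx mxtraceZ.
have weights := trace_ricci_derivation (@mu7_anti R) S_ip (@derivation7_weights R).
rewrite ricE_tr mxtrace_weights7 derivation7_trace // in weights.
have proj := trace_ricci_perp_proj_lt (@mu7_anti R) S_ip (@U7_free R) (@mu7_kerU7 R)
  (@kerU7_abelian R) (bracket_rows_U7_neq0 S_ip).
rewrite ricE_tr -[ricci_op _ _]mulmx1 ricE_tr mulmx1 mxtrace1 in proj.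
rewrite (mxtrace_perp_proj S_ip (@U7_free R)) in proj.
rewrite (mxtrace_mul_perp_proj S_ip (@U7_free R) (derivation7_quot derD)) in proj.
by clear -weights proj; lra.
Qed.
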